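(* Let $A$ be a finite alphabet and let $w\in A^{+}$ with $|w|\le 2$. Then for every integer $k\ge0$ the language $\mathrm{Count}(w,k)$ has generalised star-height $0$, and for all integers $n\ge2$ and $0\le k<n$ the language $\mathrm{ModCount}(w,k,n)$ has generalised star-height at most $1$.
   Context: Generalised regular expressions over $A$: $\emptyset$, $\varepsilon$ and each letter are expressions; if $E,F$ are expressions so are $E\cup F$, $EF$, $E^{\ast}$, $E^{c}$ (complement in $A^{\ast}$). Star-height: $h(\emptyset)=h(\varepsilon)=h(a)=0$, $h(E\cup F)=h(EF)=\max\{h(E),h(F)\}$, $h(E^{\ast})=h(E)+1$, $h(E^{c})=h(E)$; the star-height of a language is the minimum of $h(E)$ over expressions $E$ representing it. For $w\in A^{+}$ and $v\in A^{\ast}$, $|v|_{w}$ is the number of factorisations $v=xwy$ with $x,y\in A^{\ast}$ (overlapping occurrences counted separately). $\mathrm{Count}(w,k)=\{v\in A^{\ast}:|v|_{w}=k\}$ for $k\ge0$; $\mathrm{ModCount}(w,k,n)=\{v\in A^{\ast}:|v|_{w}\equiv k\pmod n\}$ for $n\ge2$, $0\le k<n$. *)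

From mathcomp Require Import all_boot.
Set Implicit Arguments. Unset Strict Implicit. Unset Printing Implicit Defensive.

Inductive gre (A : Type) : Type :=
| GEmpty : gre A
| GEps : gre A
| GLet : A -> gre A
| GUnion : gre A -> gre A -> gre A
| GConc : gre A -> gre A -> gre A
| GStar : gre A -> gre A
| GCompl : gre A -> gre A.
Arguments GEmpty {A}. Arguments GEps {A}.

Fixpoint lang (A : Type) (E : gre A) : seq A -> Prop :=
  match E with
  | GEmpty => fun _ => False
  | GEps => fun v => v = [::]
  | GLet a => fun v => v = [:: a]
  | GUnion E F => fun v => lang E v \/ lang F v
  | GConc E F => fun v => exists x y, v = x ++ y /\ lang E x /\ lang F y
  | GStar E => fun v => exists s : seq (seq A),
                 v = flatten s /\ foldr (fun u P => lang E u /\ P) True s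
  | GCompl E => fun v => ~ lang E v
  end.

Fixpoint height (A : Type) (E : gre A) : nat :=
  match E with
  | GEmpty | GEps | GLet _ => 0
  | GUnion E F | GConc E F => maxn (height E) (height F)
  | GStar E => (height E).+1
  | GCompl E => height E
  end.

Definition represents (A : Type) (E : gre A) (L : seq A -> Prop) :=
  forall v, lang E v <-> L v.

(* The star-height of L is at most h iff some expression of height <= h represents L
   (the star-height is a minimum over such expressions). *)
Definition star_height_le (A : Type) (L : seq A -> Prop) (h : nat) :=
  exists E : gre A, represents E L /\ height E <= h.

(* Star-height exactly 0 (equivalent to <= 0 since it is a minimum of naturals). *)
Definition star_height_eq0 (A : Type) (L : seq A -> Prop) :=
  exists E : gre A, represents E L /\ height E = 0.

(* |v|_w : number of factorisations v = x w y, indexed by the length i = |x|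
   (0 <= i <= |v|); the factorisation exists iff the factor of v of length |w|
   starting at position i equals w. *)
Definition occ (A : eqType) (w v : seq A) : nat :=
  count (fun i => take (size w) (drop i v) == w) (iota 0 (size v).+1).

Definition Count (A : eqType) (w : seq A) (k : nat) : seq A -> Prop :=
  fun v => occ w v = k.

Definition ModCount (A : eqType) (w : seq A) (k n : nat) : seq A -> Prop :=
  fun v => occ w v = k %[mod n].

From mathcomp Require Import all_boot.
From Stdlib Require Import Classical.
Set Implicit Arguments. Unset Strict Implicit. Unset Printing Implicit Defensive.

(* Complement makes "at least t occurrences of w = c w'" star-free: it is A* c (w' A* ∩ L),
   with L the words having at least t - 1 occurrences; "exactly k" is a difference of two
   such languages, so Count(w, k) has star-height 0 for every w.
   For |w| <= 2, cut a word right after the first letter c of each occurrence of w.  An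
   occurrence straddles a cut exactly when |w| = 2, so the counts of the pieces add up and a
   word with t + 1 occurrences is a first block, t further blocks (each beginning with w')
   and a block without occurrences.  Counting modulo n then needs only the star of the
   n-th power of the (star-free) block language. *)

Section ExpressionAlgebra.
Variable A : Type.
Implicit Types (E F G X : gre A) (s x y v : seq A).

Definition GAll : gre A := GCompl GEmpty.
Definition GInter E F : gre A := GCompl (GUnion (GCompl E) (GCompl F)).
Fixpoint GWord s : gre A := if s is a :: s' then GConc (GLet a) (GWord s') else GEps.
Fixpoint GPow X t F : gre A := if t is t'.+1 then GConc X (GPow X t' F) else F.

Lemma lang_GAll v : lang GAll v.
Proof. by case. Qed.

Lemma lang_GUnion E F v : lang (GUnion E F) v <-> lang E v \/ lang F v.
Proof. by []. Qed.

Lemma lang_GConc E F v :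
  lang (GConc E F) v <-> exists x y, v = x ++ y /\ lang E x /\ lang F y.
Proof. by []. Qed.

Lemma lang_GCompl E v : lang (GCompl E) v <-> ~ lang E v.
Proof. by []. Qed.

Lemma lang_GInter E F v : lang (GInter E F) v <-> lang E v /\ lang F v.
Proof.
split=> [notNEF | [? ?] []//].
by split; apply: NNPP => ?; apply: notNEF; [left | right].
Qed.

Lemma lang_GWord s v : lang (GWord s) v <-> v = s.
Proof.
elim: s v => [//|a s IHs] v /=; split=> [[x [y [-> [-> /IHs ->]]]] // | ->].
by exists [:: a], s; do 2!split=> //; apply/IHs.
Qed.

Lemma lang_prefix s v : lang (GConc (GWord s) GAll) v <-> take (size s) v = s.
Proof.
split=> [[x [y [-> [/lang_GWord -> _]]]] | s_pref]; first by rewrite take_size_cat.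
exists s, (drop (size s) v); rewrite lang_GWord -{1}s_pref cat_take_drop.
by split; [|split; last exact: lang_GAll].
Qed.

Lemma lang_last_letter a v : lang (GConc GAll (GLet a)) v <-> exists x, v = rcons x a.
Proof.
split=> [[x [y [-> [_ ->]]]] | [x ->]]; first by exists x; rewrite cats1.
by exists x, [:: a]; rewrite cats1; split; [|split; first exact: lang_GAll].
Qed.

Lemma GConc_congr E E' F F' :
  represents E (lang E') -> represents F (lang F') ->
  represents (GConc E F) (lang (GConc E' F')).
Proof.
by move=> eqE eqF v; split=> -[x [y [-> [/eqE ? /eqF ?]]]]; exists x, y.
Qed.

Lemma GConcA E F G : represents (GConc (GConc E F) G) (lang (GConc E (GConc F G))).
Proof.
move=> v; split.
- move=> [_ [z [-> [[x [y [-> [? ?]]]] ?]]]].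
  by exists x, (y ++ z); rewrite catA; do 2!split=> //; exists y, z.
- move=> [x [_ [-> [? [y [z [-> [? ?]]]]]]]].
  by exists (x ++ y), z; rewrite catA; do 2!split=> //; exists x, y.
Qed.

Lemma GConc_eps E : represents (GConc GEps E) (lang E).
Proof. by move=> v; split=> [[x [y [-> [-> ?]]]] // | ?]; exists [::], v. Qed.

Lemma GPow_congr X t F F' :
  represents F (lang F') -> represents (GPow X t F) (lang (GPow X t F')).
Proof.
move=> eqF; elim: t => [|t IHt] //=.
by apply: GConc_congr => // v; apply: iff_refl.
Qed.

Lemma GPow_add X a b F : GPow X a (GPow X b F) = GPow X (a + b) F.
Proof. by elim: a => //= a ->. Qed.

Lemma GPow_conc X t F G :
  represents (GConc (GPow X t F) G) (lang (GPow X t (GConc F G))).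
Proof.
elim: t => [|t IHt] v /=; first exact: iff_refl.
by apply: iff_trans (GConcA _ _ _ v) _; apply: GConc_congr => // u; apply: iff_refl.
Qed.

Lemma GPow_mul X n m F :
  represents (GPow (GPow X n GEps) m F) (lang (GPow X (n * m) F)).
Proof.
elim: m => [|m IHm] v; first by rewrite muln0.
rewrite mulnS -GPow_add /=.
apply: iff_trans (GConc_congr (fun u => iff_refl _) IHm v) _.
apply: iff_trans (GPow_conc _ _ _ _ _) _.
exact: GPow_congr (@GConc_eps _) v.
Qed.

Lemma lang_star_conc X F v :
  lang (GConc (GStar X) F) v <-> exists m, lang (GPow X m F) v.
Proof.
split=> [[_ [z [-> [[s [-> Xs]] Fz]]]] | [m]].
- elim: s Xs => [|u s IHs] /= => [_ | [Xu /IHs [m Hm]]]; first by exists 0.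
  by exists m.+1, u, (flatten s ++ z); rewrite catA.
- elim: m v => [|m IHm] v /= => [Fv | [u [_ [-> [Xu /IHm [_ [z [-> [[s [-> Xs]] Fz]]]]]]]]].
    by exists [::], v; split=> //; split=> //; exists [::].
  by exists (u ++ flatten s), z; rewrite catA; do 2!split=> //; exists (u :: s).
Qed.

Lemma lang_GPow_exists X r F (G : nat -> gre A) :
  (forall v, lang F v <-> exists m, lang (G m) v) ->
  forall v, lang (GPow X r F) v <-> exists m, lang (GPow X r (G m)) v.
Proof.
move=> eqF; elim: r => [|r IHr] v //=.
split=> [[x [y [-> [Xx /IHr [m ?]]]]] | [m [x [y [-> [Xx ?]]]]]]; first by exists m, x, y.
by exists x, y; do 2!split=> //; apply/IHr; exists m.
Qed.

Lemma lang_GPow_star X r n F v :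
  lang (GPow X r (GConc (GStar (GPow X n GEps)) F)) v <->
  exists m, lang (GPow X (r + n * m) F) v.
Proof.
have star_pow u : lang (GConc (GStar (GPow X n GEps)) F) u <->
                  exists m, lang (GPow X (n * m) F) u.
  rewrite lang_star_conc; split=> -[m /GPow_mul ?]; exists m => //; exact/GPow_mul.
apply: iff_trans (lang_GPow_exists X r star_pow v) _.
by split=> -[m Hm]; exists m; rewrite GPow_add in Hm *.
Qed.

Lemma height_GUnion E F : height (GUnion E F) = maxn (height E) (height F).
Proof. by []. Qed.

Lemma height_GWord s : height (GWord s) = 0.
Proof. by elim: s => //= a s ->. Qed.

Lemma height_GPow X t F : height X = 0 -> height (GPow X t F) = height F.
Proof. by move=> X0; elim: t => //= t ->; rewrite X0 max0n. Qed.

End ExpressionAlgebra.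

Arguments GAll {A}.

Lemma occ_cons (A : eqType) (w : seq A) a v :
  occ w (a :: v) = (take (size w) (a :: v) == w) + occ w v.
Proof.
rewrite /occ -[(size _).+1]/(1 + (size v).+1) iotaD count_cat (iotaDl 1 0) count_map.
by rewrite /= addn0.
Qed.

Section Occurrences.
Variables (A : eqType) (c : A) (w' : seq A).
Implicit Types (x y v : seq A).

Lemma occ_split_first t v : t < occ (c :: w') v ->
  exists x y, v = x ++ c :: y /\ take (size w') y = w' /\ t <= occ (c :: w') y.
Proof.
elim: v => [//|a v IHv]; rewrite occ_cons /=.
case: eqP => [[-> v_pref] | _ /IHv [x [y [-> ?]]]]; first by exists [::], v.
by exists (a :: x), y.
Qed.

Lemma occ_cat_ge x y : take (size w') y = w' ->
  (occ (c :: w') y).+1 <= occ (c :: w') (x ++ c :: y).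
Proof.
move=> y_pref; elim: x => [|a x IHx] /=; first by rewrite occ_cons /= y_pref eqxx.
by rewrite occ_cons; apply: leq_trans IHx (leq_addl _ _).
Qed.

Fixpoint occ_ge t : gre A :=
  if t is t'.+1 then
    GConc GAll (GConc (GLet c) (GInter (GConc (GWord w') GAll) (occ_ge t')))
  else GAll.

Lemma lang_occ_ge t v : lang (occ_ge t) v <-> t <= occ (c :: w') v.
Proof.
elim: t v => [|t IHt] v; first by split=> // _ [].
split=> [/lang_GConc [x [_ [-> [_ /lang_GConc [_ [y [-> [-> ]]]]]]]] | ].
  case/lang_GInter=> /lang_prefix y_pref /IHt ?.
  exact: leq_ltn_trans (occ_cat_ge x y_pref).
move/occ_split_first => [x [y [-> [y_pref ?]]]].
exists x, (c :: y); split=> //; split; first exact: lang_GAll.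
by exists [:: c], y; do 2!split=> //; apply/lang_GInter; rewrite lang_prefix IHt.
Qed.

Definition occ_eq k : gre A := GInter (occ_ge k) (GCompl (occ_ge k.+1)).

Lemma lang_occ_eq k v : lang (occ_eq k) v <-> occ (c :: w') v = k.
Proof.
rewrite lang_GInter lang_GCompl !lang_occ_ge.
split=> [[ge_k /negP] | <-]; last by rewrite ltnn.
by rewrite -ltnNge ltnS => le_k; apply/eqP; rewrite eqn_leq le_k.
Qed.

Lemma height_occ_ge t : height (occ_ge t) = 0.
Proof. by elim: t => //= t ->; rewrite height_GWord. Qed.

Lemma height_occ_eq k : height (occ_eq k) = 0.
Proof. by rewrite /= !height_occ_ge height_GWord. Qed.

Lemma Count_star_free k : star_height_eq0 (Count (c :: w') k).
Proof. by exists (occ_eq k); split=> [v|]; [apply: lang_occ_eq | apply: height_occ_eq]. Qed.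

Lemma occ_singleton : occ (c :: w') [:: c] = 1 - size w'.
Proof. by rewrite occ_cons /= eqseq_cons eqxx; case: w'. Qed.

Hypothesis w'_short : size w' <= 1.

Lemma take_rcons_cat x y : take (size w') (rcons x c ++ y) = take (size w') (rcons x c).
Proof. by rewrite takel_cat // size_rcons (leq_trans w'_short). Qed.

Lemma occ_cat_occurrence x y : take (size w') y = w' ->
  occ (c :: w') (x ++ c :: y) = occ (c :: w') (rcons x c) + occ (c :: w') y + size w'.
Proof.
move=> y_pref; elim: x => [|a x IHx] /=.
  by rewrite occ_cons /= y_pref eqxx occ_singleton addnAC subnK.
by rewrite !occ_cons IHx -cat_rcons /= take_rcons_cat !addnA.
Qed.

Lemma occ_split_block t v : occ (c :: w') v = t.+1 ->
  exists x y, v = rcons x c ++ y /\ occ (c :: w') (rcons x c) = 1 - size w' /\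
              take (size w') y = w' /\ occ (c :: w') y = t.
Proof.
elim: v t => [//|a v IHv] t; rewrite occ_cons /=.
case: eqP => [[-> v_pref] [occ_v] | not_occ /IHv [x [y [v_eq [x_block y_tail]]]]].
  by exists [::], v; rewrite occ_singleton.
exists (a :: x), y; subst v; split=> //; split=> //.
by rewrite /= occ_cons x_block /= -(take_rcons_cat x y); case: eqP.
Qed.

Lemma occ_join_block x y : take (size w') y = w' ->
  occ (c :: w') (rcons x c) = 1 - size w' ->
  occ (c :: w') (rcons x c ++ y) = (occ (c :: w') y).+1.
Proof.
by move=> y_pref x_block; rewrite cat_rcons occ_cat_occurrence // x_block addnAC subnK.
Qed.

(* A block holds [1 - size w'] occurrences: one if |w| = 1, none if |w| = 2, since then the
   occurrence starting with its last letter straddles the next cut. *)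
Definition first_block : gre A := GInter (occ_eq (1 - size w')) (GConc GAll (GLet c)).
Definition block : gre A := GInter first_block (GConc (GWord w') GAll).
Definition last_block : gre A := GInter (occ_eq 0) (GConc (GWord w') GAll).

Lemma lang_first_block u :
  lang first_block u <-> occ (c :: w') u = 1 - size w' /\ exists x, u = rcons x c.
Proof. by rewrite lang_GInter lang_occ_eq lang_last_letter. Qed.

Lemma lang_block u :
  lang block u <->
  (occ (c :: w') u = 1 - size w' /\ exists x, u = rcons x c) /\ take (size w') u = w'.
Proof. by rewrite lang_GInter lang_first_block lang_prefix. Qed.

Lemma lang_last_block u :
  lang last_block u <-> occ (c :: w') u = 0 /\ take (size w') u = w'.
Proof. by rewrite lang_GInter lang_occ_eq lang_prefix. Qed.

Lemma lang_blocks t y :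
  lang (GPow block t last_block) y <-> take (size w') y = w' /\ occ (c :: w') y = t.
Proof.
elim: t y => [|t IHt] y; first by rewrite [GPow _ _ _]/= lang_last_block and_comm.
split=> [/lang_GConc [u [z [-> [/lang_block [[u_block [x u_eq]] u_pref] /IHt [z_pref occ_z]]]]] | ].
  by subst u; rewrite take_rcons_cat occ_join_block // occ_z.
move=> [y_pref /occ_split_block [x [z [y_eq [x_block [z_pref occ_z]]]]]].
apply/lang_GConc; exists (rcons x c), z; split=> //; split; last exact/IHt.
by apply/lang_block; rewrite -(take_rcons_cat x z) -y_eq; split=> //; split=> //; exists x.
Qed.

Lemma lang_occ_succ t v :
  lang (GConc first_block (GPow block t last_block)) v <-> occ (c :: w') v = t.+1.
Proof.
split=> [[u [y [-> [/lang_first_block [u_block [x u_eq]] /lang_blocks [y_pref occ_y]]]]] | ].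
  by subst u; rewrite occ_join_block // occ_y.
move=> /occ_split_block [x [y [-> [x_block y_tail]]]].
exists (rcons x c), y; split=> //; split; last exact/lang_blocks.
by apply/lang_first_block; split=> //; exists x.
Qed.

Definition occ_mod_class r n : gre A :=
  GConc first_block (GPow block r (GConc (GStar (GPow block n GEps)) last_block)).

Lemma lang_occ_mod_class r n v :
  lang (occ_mod_class r n) v <-> exists m, occ (c :: w') v = (r + n * m).+1.
Proof.
split=> [[x [y [-> [Fx /lang_GPow_star [m Hm]]]]] | [m /lang_occ_succ [x [y [-> [Fx Hy]]]]]].
  by exists m; apply/lang_occ_succ; exists x, y.
by exists x, y; do 2!split=> //; apply/lang_GPow_star; exists m.
Qed.

Lemma height_block : height block = 0.
Proof. by rewrite /= !height_occ_ge height_GWord. Qed.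

Lemma height_occ_mod_class r n : height (occ_mod_class r n) = 1.
Proof.
rewrite /= (height_GPow _ _ height_block) /= (height_GPow _ _ height_block).
by rewrite !height_occ_ge height_GWord.
Qed.

Definition occ_mod k n : gre A :=
  if k is k'.+1 then occ_mod_class k' n else GUnion (occ_eq 0) (occ_mod_class n.-1 n).

Lemma lang_occ_mod k n v : 0 < n ->
  lang (occ_mod k n) v <-> exists m, occ (c :: w') v = k + n * m.
Proof.
move=> n_gt0; case: k => [|k]; rewrite [occ_mod _ _]/=; last first.
  by rewrite lang_occ_mod_class; split=> -[m ->]; exists m.
rewrite lang_GUnion lang_occ_eq lang_occ_mod_class.
have succ_mul m : (n.-1 + n * m).+1 = n * m.+1 by rewrite mulnS -addSn prednK.
split=> [[-> | [m ->]] | [[|m] ->]]; first by exists 0; rewrite muln0.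
- by exists m.+1; rewrite succ_mul.
- by left; rewrite muln0.
- by right; exists m; rewrite succ_mul.
Qed.

Lemma height_occ_mod k n : height (occ_mod k n) <= 1.
Proof.
case: k => [|k]; rewrite [occ_mod _ _]/= ?height_GUnion height_occ_mod_class //.
by rewrite height_occ_eq.
Qed.

End Occurrences.

Lemma eqmod_small_iff k n s : k < n -> (s = k %[mod n]) <-> exists m, s = k + n * m.
Proof.
move=> lt_kn; rewrite (modn_small lt_kn); split=> [s_mod | [m ->]].
  by exists (s %/ n); rewrite {1}(divn_eq s n) s_mod addnC mulnC.
by rewrite addnC mulnC modnMDl modn_small.
Qed.

Theorem proposition2p4 (A : finType) (w : seq A) :
  0 < size w <= 2 ->
  (forall k : nat, star_height_eq0 (Count w k)) /\
  (forall n k : nat, 2 <= n -> k < n -> star_height_le (ModCount w k n) 1).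
Proof.
case: w => [//|c w'] /= size_w; split=> [k | n k n_ge2 lt_kn]; first exact: Count_star_free.
have w'_short : size w' <= 1 by rewrite -ltnS.
exists (occ_mod c w' k n); split=> [v | ]; last exact: height_occ_mod.
rewrite /ModCount eqmod_small_iff //; exact: lang_occ_mod (ltnW n_ge2).
Qed.
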